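(* Let $q-p=3$, $-1<p<2$ and $q>\frac{2p}{2-p}$, and let $r>1$. If $\frac{p(r^q-1)}{q(r^p-1)}\le r^2$, then $I(p,q,r,x)<r^2+1-\frac{r^2}{x^2}-x^2$ for all $x\in(1,r)$. If $\frac{p(r^q-1)}{q(r^p-1)}>r^2$, then $I(p,q,r,x)<r^2-2r+2x-x^2$ for all $x\in(1,r)$.
   Context: For $x\in(1,r)$: $I(p,q,r,x)=\big(1+\frac{r^q-1}{r^p-1}(x^p-1)\big)^{2/q}-x^2$ if $p\ne0$, and $I(0,q,r,x)=\big(1+\frac{r^q-1}{\log r}\log x\big)^{2/q}-x^2$. For $p=0$ the quantity $\frac{p(r^q-1)}{q(r^p-1)}$ is understood as its limit $\frac{r^q-1}{q\log r}$. *)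

From Stdlib Require Import Reals.
Open Scope R_scope.

Definition I (p q r x : R) : R :=
  if Req_dec_T p 0 then
    Rpower (1 + (Rpower r q - 1) / ln r * ln x) (2 / q) - x ^ 2
  else
    Rpower (1 + (Rpower r q - 1) / (Rpower r p - 1) * (Rpower x p - 1)) (2 / q) - x ^ 2.

(* The quantity p(r^q-1)/(q(r^p-1)), with its limit (r^q-1)/(q log r) at p = 0. *)
Definition ratio (p q r : R) : R :=
  if Req_dec_T p 0 then (Rpower r q - 1) / (q * ln r)
  else p * (Rpower r q - 1) / (q * (Rpower r p - 1)).

From Stdlib Require Import Reals Lra.
From Coquelicot Require Import Coquelicot.
Open Scope R_scope.

(* Write Λ(t) = (t^p - 1)/p (ln t if p = 0) and K = (r^q - 1)/Λ(r), so that
   I(p,q,r,x) = (1 + K Λ(x))^(2/q) - x^2 and the ratio equals K/q.  For a profile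
   g with g(r) = r^2, the bound I < g - x^2 amounts to positivity on (1,r) of
   D = g^(q/2) - 1 - K Λ, which vanishes at r.  Its derivative factors as
   D'(t) = t^(p-1) (e^L(t) - K) with L = ln((q/2) g' g^(q/2-1) t^(1-p)), so D'
   has the sign of L - ln K.  For g = r^2 + 1 - r^2/t^2 we have D(1) = 0, L rises
   then falls, and L(1) = ln(q r^2) >= ln K when K/q <= r^2; for
   g = r^2 - 2r + 2t we have D(1) > 0, L falls then rises, and L(r) = ln(q r^2) < ln K
   when K/q > r^2.  In both configurations a point of (1,r) with D <= 0 would give,
   by the mean value theorem, a crossing pattern of L through ln K that the shape of
   L forbids. *)

Lemma mean_value (f df : R -> R) (a b : R) : a < b ->
  (forall t, a <= t <= b -> is_derive f t (df t)) ->
  exists c, a < c < b /\ f b - f a = df c * (b - a).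
Proof.
  intros Hab Hf. destruct (MVT_cor2 f df a b Hab) as [c [Ec Hc]].
  - intros c Hc. apply is_derive_Reals, Hf, Hc.
  - exists c. split; assumption.
Qed.

Lemma Rpower_1_l (y : R) : Rpower 1 y = 1.
Proof. unfold Rpower. rewrite ln_1, Rmult_0_r. apply exp_0. Qed.

Lemma one_le_Rpower (x y : R) : 1 <= x -> 0 <= y -> 1 <= Rpower x y.
Proof.
  intros Hx Hy. rewrite <- (Rpower_1_l y). apply Rle_Rpower_l; lra.
Qed.

Lemma one_lt_Rpower (x y : R) : 1 < x -> 0 < y -> 1 < Rpower x y.
Proof.
  intros Hx Hy. rewrite <- (Rpower_1_l y). apply Rlt_Rpower_l; lra.
Qed.

Lemma Rpower_lt_of_lt_Rpower (y z q : R) : 0 < q -> 0 < y -> 0 < z ->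
  y < Rpower z (q / 2) -> Rpower y (2 / q) < z.
Proof.
  intros Hq Hy Hz H.
  rewrite <- (Rpower_1 z Hz).
  replace 1 with (q / 2 * (2 / q)) by (field; lra).
  rewrite <- Rpower_mult.
  apply Rlt_Rpower_l; [apply Rdiv_lt_0_compat; lra | split; assumption].
Qed.

Lemma sign_mul_exp_sub (w y K : R) : 0 < w -> 0 < K ->
  (w * (exp y - K) < 0 <-> y < ln K) /\ (0 < w * (exp y - K) <-> ln K < y).
Proof.
  intros Hw HK. pose proof (exp_ln K HK) as EK.
  split; split; intros H.
  - apply exp_lt_inv. rewrite EK. nra.
  - apply exp_increasing in H. rewrite EK in H. nra.
  - apply exp_lt_inv. rewrite EK. nra.
  - apply exp_increasing in H. rewrite EK in H. nra.
Qed.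

Definition neg_after_nonpos (f : R -> R) (a b : R) : Prop :=
  forall s t, a <= s -> s < t -> t <= b -> f s <= 0 -> f t < 0.

Definition pos_after_nonneg (f : R -> R) (a b : R) : Prop :=
  forall s t, a <= s -> s < t -> t <= b -> 0 <= f s -> 0 < f t.

Lemma neg_after_nonpos_of_decreasing (f P N : R -> R) (a b : R) :
  (forall u, a <= u <= b -> 0 < P u /\ f u * P u = N u) ->
  (forall s t, a <= s -> s < t -> t <= b -> N t < N s) ->
  neg_after_nonpos f a b.
Proof.
  intros HP HN s t Hs Hst Ht Hfs.
  destruct (HP s ltac:(lra)) as [Ps Es], (HP t ltac:(lra)) as [Pt Et].
  specialize (HN s t Hs Hst Ht). nra.
Qed.

Lemma pos_after_nonneg_of_increasing (f P N : R -> R) (a b : R) :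
  (forall u, a <= u <= b -> 0 < P u /\ f u * P u = N u) ->
  (forall s t, a <= s -> s < t -> t <= b -> N s < N t) ->
  pos_after_nonneg f a b.
Proof.
  intros HP HN s t Hs Hst Ht Hfs.
  destruct (HP s ltac:(lra)) as [Ps Es], (HP t ltac:(lra)) as [Pt Et].
  specialize (HN s t Hs Hst Ht). nra.
Qed.

Section SingleCrossing.

Variables (a b c : R) (D dD L dL : R -> R).
Hypothesis a_lt_b : a < b.
Hypothesis D_derive : forall t, a <= t <= b -> is_derive D t (dD t).
Hypothesis L_derive : forall t, a <= t <= b -> is_derive L t (dL t).
Hypothesis dD_sign :
  forall t, a < t < b -> (dD t < 0 <-> L t < c) /\ (0 < dD t <-> c < L t).
Hypothesis D_b : D b = 0.

Lemma below_level_left (x : R) : a < x < b -> D x <= D a ->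
  exists e, a < e < x /\ L e <= c.
Proof.
  intros Hx HDx.
  destruct (mean_value D dD a x) as [e [He Ee]]; [lra | intros; apply D_derive; lra |].
  exists e. split; [exact He |].
  apply Rnot_lt_le. intros HLe. apply (proj2 (dD_sign e ltac:(lra))) in HLe. nra.
Qed.

Lemma strictly_below_level_left (x : R) : a < x < b -> D x < D a ->
  exists e, a < e < x /\ L e < c.
Proof.
  intros Hx HDx.
  destruct (mean_value D dD a x) as [e [He Ee]]; [lra | intros; apply D_derive; lra |].
  exists e. split; [exact He |].
  apply (proj1 (dD_sign e ltac:(lra))). nra.
Qed.

Lemma above_level_right (x : R) : a < x < b -> D x <= 0 ->
  exists k, x < k < b /\ c <= L k.
Proof.
  intros Hx HDx.
  destruct (mean_value D dD x b) as [k [Hk Ek]]; [lra | intros; apply D_derive; lra |].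
  exists k. split; [exact Hk |].
  apply Rnot_lt_le. intros HLk. apply (proj1 (dD_sign k ltac:(lra))) in HLk. nra.
Qed.

Lemma pos_of_rise_fall : 0 <= D a -> c <= L a -> neg_after_nonpos dL a b ->
  forall x, a < x < b -> 0 < D x.
Proof.
  intros Da La HdL x Hx. apply Rnot_le_lt. intros Dx.
  destruct (below_level_left x Hx ltac:(lra)) as [e [He Le]].
  destruct (above_level_right x Hx Dx) as [k [Hk Lk]].
  destruct (mean_value L dL a e) as [z1 [Hz1 E1]]; [lra | intros; apply L_derive; lra |].
  destruct (mean_value L dL e k) as [z2 [Hz2 E2]]; [lra | intros; apply L_derive; lra |].
  assert (dL z1 <= 0) by nra.
  assert (dL z2 < 0) by (apply (HdL z1 z2); lra).
  nra.
Qed.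

Lemma pos_of_fall_rise : 0 < D a -> L b < c -> pos_after_nonneg dL a b ->
  forall x, a < x < b -> 0 < D x.
Proof.
  intros Da Lb HdL x Hx. apply Rnot_le_lt. intros Dx.
  destruct (strictly_below_level_left x Hx ltac:(lra)) as [e [He Le]].
  destruct (above_level_right x Hx Dx) as [k [Hk Lk]].
  destruct (mean_value L dL e k) as [z1 [Hz1 E1]]; [lra | intros; apply L_derive; lra |].
  destruct (mean_value L dL k b) as [z2 [Hz2 E2]]; [lra | intros; apply L_derive; lra |].
  assert (0 <= dL z1) by nra.
  assert (0 < dL z2) by (apply (HdL z1 z2); lra).
  nra.
Qed.

End SingleCrossing.

Definition box_cox (p t : R) : R :=
  if Req_dec_T p 0 then ln t else (Rpower t p - 1) / p.

Lemma box_cox_derive (p t : R) : 0 < t -> is_derive (box_cox p) t (Rpower t (p - 1)).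
Proof.
  intros Ht. unfold box_cox. destruct (Req_dec_T p 0) as [-> | Hp].
  - rewrite Rminus_0_l.
    rewrite Rpower_Ropp, Rpower_1 by exact Ht. now apply is_derive_ln.
  - unfold Rpower. auto_derive; [exact Ht |].
    replace ((p - 1) * ln t) with (p * ln t + - ln t) by ring.
    rewrite exp_plus, exp_Ropp, exp_ln by exact Ht. field. split; lra.
Qed.

Lemma box_cox_1 (p : R) : box_cox p 1 = 0.
Proof.
  unfold box_cox. destruct (Req_dec_T p 0) as [_ | Hp].
  - apply ln_1.
  - rewrite Rpower_1_l. unfold Rdiv. ring.
Qed.

Lemma box_cox_pos (p t : R) : 1 < t -> 0 < box_cox p t.
Proof.
  intros Ht.
  destruct (mean_value (box_cox p) (fun u => Rpower u (p - 1)) 1 t) as [c [Hc Ec]];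
    [exact Ht | intros u Hu; apply box_cox_derive; lra |].
  rewrite box_cox_1 in Ec.
  assert (0 < Rpower c (p - 1)) by apply exp_pos.
  nra.
Qed.

Definition matching_coef (p q r : R) : R := (Rpower r q - 1) / box_cox p r.

Lemma matching_coef_spec (p q r : R) : 1 < r ->
  matching_coef p q r * box_cox p r = Rpower r q - 1.
Proof.
  intros Hr. pose proof (box_cox_pos p r Hr). unfold matching_coef. field. lra.
Qed.

Lemma matching_coef_pos (p q r : R) : 0 < q -> 1 < r -> 0 < matching_coef p q r.
Proof.
  intros Hq Hr. pose proof (one_lt_Rpower r q Hr Hq).
  apply Rdiv_lt_0_compat; [lra | apply box_cox_pos, Hr].
Qed.

Lemma I_eq (p q r x : R) : 1 < r ->
  I p q r x = Rpower (1 + matching_coef p q r * box_cox p x) (2 / q) - x ^ 2.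
Proof.
  intros Hr. pose proof (box_cox_pos p r Hr) as Hbr.
  unfold I, matching_coef, box_cox in *. destruct (Req_dec_T p 0) as [_ | Hp].
  - reflexivity.
  - assert (Rpower r p - 1 <> 0).
    { intros E. rewrite E in Hbr. unfold Rdiv in Hbr. lra. }
    do 3 f_equal. field. split; assumption.
Qed.

Lemma ratio_eq (p q r : R) : 0 < q -> 1 < r -> ratio p q r = matching_coef p q r / q.
Proof.
  intros Hq Hr. pose proof (box_cox_pos p r Hr) as Hbr.
  unfold ratio, matching_coef, box_cox in *. destruct (Req_dec_T p 0) as [_ | Hp].
  - field. split; lra.
  - assert (Rpower r p - 1 <> 0).
    { intros E. rewrite E in Hbr. unfold Rdiv in Hbr. lra. }
    field. repeat split; lra.
Qed.

Section ProfileComparison.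

Variables (p q r K : R) (g dg d2g : R -> R).
Hypothesis q_pos : 0 < q.
Hypothesis r_gt_1 : 1 < r.
Hypothesis K_pos : 0 < K.
Hypothesis K_spec : K * box_cox p r = Rpower r q - 1.
Hypothesis g_derive : forall t, 1 <= t <= r -> is_derive g t (dg t).
Hypothesis dg_derive : forall t, 1 <= t <= r -> is_derive dg t (d2g t).
Hypothesis g_pos : forall t, 1 <= t <= r -> 0 < g t.
Hypothesis dg_pos : forall t, 1 <= t <= r -> 0 < dg t.
Hypothesis g_r : g r = r ^ 2.

Definition gap (t : R) : R := Rpower (g t) (q / 2) - 1 - K * box_cox p t.

Definition log_profile (t : R) : R :=
  ln (q / 2 * dg t) + (q / 2 - 1) * ln (g t) + (1 - p) * ln t.

Definition log_profile' (t : R) : R :=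
  d2g t / dg t + (q / 2 - 1) * (dg t / g t) + (1 - p) / t.

Lemma gap_derive (t : R) : 1 <= t <= r ->
  is_derive gap t (Rpower t (p - 1) * (exp (log_profile t) - K)).
Proof.
  intros Ht. pose proof (g_pos t Ht) as Hg. pose proof (dg_pos t Ht) as Hdg.
  pose proof (g_derive t Ht) as Dg. pose proof (box_cox_derive p t ltac:(lra)) as Db.
  unfold gap, log_profile, Rpower. auto_derive.
  - repeat split; [eexists; exact Dg | exact Hg | eexists; exact Db].
  - replace (Derive (fun x => g x) t) with (dg t) by (symmetry; now apply is_derive_unique).
    replace (Derive (fun x => box_cox p x) t) with (Rpower t (p - 1))
      by (symmetry; now apply is_derive_unique).
    replace (q / 2 * ln (g t)) with ((q / 2 - 1) * ln (g t) + ln (g t)) by ring.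
    replace ((1 - p) * ln t) with (- ((p - 1) * ln t)) by ring.
    rewrite !exp_plus, exp_Ropp, !exp_ln by (try apply Rmult_lt_0_compat; lra).
    pose proof (exp_pos ((p - 1) * ln t)). unfold Rpower. field. split; lra.
Qed.

Lemma log_profile_derive (t : R) : 1 <= t <= r -> is_derive log_profile t (log_profile' t).
Proof.
  intros Ht. pose proof (g_pos t Ht) as Hg. pose proof (dg_pos t Ht) as Hdg.
  pose proof (g_derive t Ht) as Dg. pose proof (dg_derive t Ht) as Ddg.
  unfold log_profile, log_profile'. auto_derive.
  - repeat split; [eexists; exact Ddg | nra | eexists; exact Dg | exact Hg | lra].
  - replace (Derive (fun x => g x) t) with (dg t) by (symmetry; now apply is_derive_unique).
    replace (Derive (fun x => dg x) t) with (d2g t) by (symmetry; now apply is_derive_unique).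
    field. repeat split; lra.
Qed.

Lemma gap_r : gap r = 0.
Proof.
  unfold gap. rewrite g_r, K_spec.
  unfold Rpower at 1. rewrite ln_pow by lra.
  replace (q / 2 * (INR 2 * ln r)) with (q * ln r) by (simpl; field).
  unfold Rpower. ring.
Qed.

Lemma gap_1 : gap 1 = Rpower (g 1) (q / 2) - 1.
Proof. unfold gap. rewrite box_cox_1. ring. Qed.

Lemma gap_sign (t : R) : 1 < t < r ->
  let dgap := Rpower t (p - 1) * (exp (log_profile t) - K) in
  (dgap < 0 <-> log_profile t < ln K) /\ (0 < dgap <-> ln K < log_profile t).
Proof. intros Ht. apply sign_mul_exp_sub; [apply exp_pos | exact K_pos]. Qed.

Lemma gap_bound (x : R) : 1 < x < r -> 0 < gap x ->
  Rpower (1 + K * box_cox p x) (2 / q) < g x.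
Proof.
  intros Hx Hgap. unfold gap in Hgap.
  pose proof (box_cox_pos p x ltac:(lra)).
  apply Rpower_lt_of_lt_Rpower; [exact q_pos | nra | apply g_pos; lra | lra].
Qed.

Theorem bound_of_rise_fall :
  1 <= g 1 -> ln K <= log_profile 1 -> neg_after_nonpos log_profile' 1 r ->
  forall x, 1 < x < r -> Rpower (1 + K * box_cox p x) (2 / q) < g x.
Proof.
  intros g_1 L_1 HdL x Hx. apply gap_bound; [exact Hx |].
  apply (pos_of_rise_fall 1 r (ln K) gap
           (fun t => Rpower t (p - 1) * (exp (log_profile t) - K))
           log_profile log_profile'); auto.
  - exact gap_derive.
  - exact log_profile_derive.
  - exact gap_sign.
  - exact gap_r.
  - rewrite gap_1. pose proof (one_le_Rpower (g 1) (q / 2) g_1 ltac:(lra)). lra.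
Qed.

Theorem bound_of_fall_rise :
  1 < g 1 -> log_profile r < ln K -> pos_after_nonneg log_profile' 1 r ->
  forall x, 1 < x < r -> Rpower (1 + K * box_cox p x) (2 / q) < g x.
Proof.
  intros g_1 L_r HdL x Hx. apply gap_bound; [exact Hx |].
  apply (pos_of_fall_rise 1 r (ln K) gap
           (fun t => Rpower t (p - 1) * (exp (log_profile t) - K))
           log_profile log_profile'); auto.
  - exact gap_derive.
  - exact log_profile_derive.
  - exact gap_sign.
  - exact gap_r.
  - rewrite gap_1. pose proof (one_lt_Rpower (g 1) (q / 2) g_1 ltac:(lra)). lra.
Qed.

End ProfileComparison.

Lemma bound_by_rational_profile (p q r K : R) :
  0 < q -> -2 < p -> 1 < r -> 0 < K -> K * box_cox p r = Rpower r q - 1 ->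
  K <= q * r ^ 2 ->
  forall x, 1 < x < r -> Rpower (1 + K * box_cox p x) (2 / q) < r ^ 2 + 1 - r ^ 2 / x ^ 2.
Proof.
  intros Hq Hp Hr HK HKr HKle.
  assert (g_num_pos : forall t, 1 <= t -> 0 < (r ^ 2 + 1) * t ^ 2 - r ^ 2).
  { intros t Ht. assert (1 <= t ^ 2) by nra. nra. }
  assert (g_pos : forall t, 1 <= t -> 0 < r ^ 2 + 1 - r ^ 2 / t ^ 2).
  { intros t Ht.
    replace (r ^ 2 + 1 - r ^ 2 / t ^ 2) with (((r ^ 2 + 1) * t ^ 2 - r ^ 2) / t ^ 2)
      by (field; lra).
    apply Rdiv_lt_0_compat; [apply g_num_pos, Ht | nra]. }
  apply (bound_of_rise_fall p q r K (fun t => r ^ 2 + 1 - r ^ 2 / t ^ 2)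
           (fun t => 2 * r ^ 2 / t ^ 3) (fun t => - 6 * r ^ 2 / t ^ 4)); try assumption.
  - intros t Ht. auto_derive; [nra | field; lra].
  - intros t Ht. auto_derive; [nra | field; lra].
  - intros t Ht. apply g_pos; lra.
  - intros t Ht. apply Rdiv_lt_0_compat; [nra | apply pow_lt; lra].
  - field. lra.
  - right. field.
  - unfold log_profile. rewrite ln_1.
    replace (r ^ 2 + 1 - r ^ 2 / 1 ^ 2) with 1 by field. rewrite ln_1.
    rewrite !Rmult_0_r, !Rplus_0_r.
    replace (q / 2 * (2 * r ^ 2 / 1 ^ 3)) with (q * r ^ 2) by field.
    apply ln_le; lra.
  - (* Multiplying by t^3 g(t) clears the denominators of log_profile'. *)
    apply (neg_after_nonpos_of_decreasing _ (fun u => u * ((r ^ 2 + 1) * u ^ 2 - r ^ 2))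
             (fun u => (q - 2) * r ^ 2 - (p + 2) * ((r ^ 2 + 1) * u ^ 2 - r ^ 2))).
    + intros u Hu. pose proof (g_num_pos u ltac:(lra)).
      split; [nra |]. unfold log_profile'. field. repeat split; lra.
    + intros s t Hs Hst Ht.
      assert (0 < (p + 2) * ((r ^ 2 + 1) * (t ^ 2 - s ^ 2))).
      { apply Rmult_lt_0_compat; [lra |]. apply Rmult_lt_0_compat; nra. }
      nra.
Qed.

Lemma bound_by_linear_profile (p q r K : R) :
  0 < q -> 2 * p < q -> 1 < r -> 0 < K -> K * box_cox p r = Rpower r q - 1 ->
  q * Rpower r (q - p - 1) < K ->
  forall x, 1 < x < r -> Rpower (1 + K * box_cox p x) (2 / q) < r ^ 2 - 2 * r + 2 * x.
Proof.
  intros Hq Hp Hr HK HKr HKgt.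
  assert (g_gt_1 : forall t, 1 <= t -> 1 < r ^ 2 - 2 * r + 2 * t) by (intros; nra).
  apply (bound_of_fall_rise p q r K (fun t => r ^ 2 - 2 * r + 2 * t)
           (fun _ => 2) (fun _ => 0)); try assumption.
  - intros t Ht. auto_derive; [exact Logic.I | ring].
  - intros t Ht. auto_derive; [exact Logic.I | ring].
  - intros t Ht. pose proof (g_gt_1 t ltac:(lra)). lra.
  - intros t Ht. lra.
  - ring.
  - apply g_gt_1. lra.
  - unfold log_profile.
    replace (r ^ 2 - 2 * r + 2 * r) with (r ^ 2) by ring.
    replace (q / 2 * 2) with q by field.
    rewrite ln_pow by lra.
    replace (ln q + (q / 2 - 1) * (INR 2 * ln r) + (1 - p) * ln r)
      with (ln q + ln (Rpower r (q - p - 1))) by (rewrite ln_Rpower; simpl; field).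
    rewrite <- ln_mult by (try apply exp_pos; lra).
    apply ln_increasing; [| exact HKgt].
    apply Rmult_lt_0_compat; [lra | apply exp_pos].
  - (* Multiplying by t g(t) clears the denominators of log_profile'. *)
    apply (pos_after_nonneg_of_increasing _ (fun u => u * (r ^ 2 - 2 * r + 2 * u))
             (fun u => (q - 2 * p) * u + (1 - p) * (r ^ 2 - 2 * r))).
    + intros u Hu. pose proof (g_gt_1 u ltac:(lra)).
      split; [nra |]. unfold log_profile'. field. lra.
    + intros s t Hs Hst Ht. nra.
Qed.

Theorem lemma7p4 (p q r : R) :
  q - p = 3 -> -1 < p < 2 -> q > 2 * p / (2 - p) -> r > 1 ->
  (ratio p q r <= r ^ 2 ->
     forall x, 1 < x < r -> I p q r x < r ^ 2 + 1 - r ^ 2 / x ^ 2 - x ^ 2) /\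
  (ratio p q r > r ^ 2 ->
     forall x, 1 < x < r -> I p q r x < r ^ 2 - 2 * r + 2 * x - x ^ 2).
Proof.
  intros Hqp Hp _ Hr.
  assert (Hq : 0 < q) by lra.
  pose proof (matching_coef_pos p q r Hq Hr) as HK.
  pose proof (matching_coef_spec p q r Hr) as HKr.
  rewrite ratio_eq by assumption.
  split; intros Hratio x Hx; rewrite I_eq by assumption; apply Rplus_lt_compat_r.
  - apply bound_by_rational_profile; try assumption; [lra |].
    rewrite Rmult_comm. apply (Rle_div_l _ (r ^ 2) q); lra.
  - apply bound_by_linear_profile; try assumption; [lra |].
    replace (q - p - 1) with (INR 2) by (simpl; lra).
    rewrite Rpower_pow, Rmult_comm by lra. apply (Rlt_div_r (r ^ 2) _ q); lra.
Qed.
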